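(* Let $e$ be a directed edge of $\Gamma$ labeled $y$, not on $T$, from $g$ to $g'=gy$. Write $\gamma=\mathrm{nf}(g)=x^{i_n}y^{\epsilon_n}\cdots x^{i_1}y^{\epsilon_1}x^{i_0}$ and $\gamma'=\mathrm{nf}(g')=x^{j_{n'}}y^{\varepsilon_{n'}}\cdots x^{j_1}y^{\varepsilon_1}x^{j_0}$, let $s_k=i_k+\cdots+i_0$ ($0\le k\le n$), $s'_k=j_k+\cdots+j_0$ ($0\le k\le n'$), let $m=\min\{k\mid s_k\le0\}$ (or $m=n$ if no such $k$) and $m'=\min\{k\mid s'_k\le1\}$ (or $m'=n'$ if no such $k$). Then $m=m'$, and the sequence of $y$-rule sizes $(s_0,\dots,s_{m-1})$ used in rewriting $\gamma y$ to $\gamma'$ coincides (in order) with the sequence of $y^{-1}$-rule sizes $(s'_0-1,\dots,s'_{m'-1}-1)$ used in rewriting $\gamma' y^{-1}$ to $\gamma$; that is, $s'_k-1=s_k$ for $0\le k\le m-1$.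
   Context: $F$ is Thompson's group with generators $x,y$, $A=\{x^{\pm1},y^{\pm1}\}$, $\Gamma$ its Cayley graph over $A$. Guba–Sapir's convergent rewriting system $\Sigma$ consists of free reductions $aa^{-1}\to\emptyset$ ($a\in A$), the $y$-rules of size $i$: $y^\epsilon x^iy\to x^iyx^{-i-1}y^\epsilon x^{i+1}$, and the $y^{-1}$-rules of size $i$: $y^\epsilon x^{i+1}y^{-1}\to x^{i+1}y^{-1}x^{-i}y^\epsilon x^i$ ($\epsilon\in\{1,-1\}$, $i\ge1$). $\mathcal N$ is the set of $\Sigma$-irreducible words (unique normal forms for $F$), and $\mathrm{nf}(w)$ denotes the word of $\mathcal N$ representing the same element as $w$. $T$ is the subtree of $\Gamma$ whose non-backtracking paths from the identity are labeled exactly by the words of $\mathcal N$. *)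

From Stdlib Require Import ZArith List.
Import ListNotations.
Open Scope Z_scope.

Inductive letter : Type := X | Xi | Y | Yi.

Definition inv (a : letter) : letter :=
  match a with X => Xi | Xi => X | Y => Yi | Yi => Y end.

Definition word := list letter.

Definition xpow (i : Z) : word :=
  if 0 <=? i then repeat X (Z.to_nat i) else repeat Xi (Z.to_nat (- i)).
Definition ypow (e : bool) : letter := if e then Y else Yi.
Definition xn (n : nat) : word := repeat X n.
Definition xin (n : nat) : word := repeat Xi n.

(* Thompson's group F = < x, y | [x y^-1, x^-1 y x], [x y^-1, x^-2 y x^2] >,
   with [a,b] = a^-1 b^-1 a b.  Relators as words. *)
Definition winv (w : word) : word := rev (map inv w).
Definition comm (a b : word) : word := winv a ++ winv b ++ a ++ b.
Definition rel1 : word := comm [X; Yi] ([Xi; Y; X]).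
Definition rel2 : word := comm [X; Yi] ([Xi; Xi; Y; X; X]).

Inductive elem_step : word -> word -> Prop :=
| es_free : forall u v a, elem_step (u ++ [a; inv a] ++ v) (u ++ v)
| es_rel1 : forall u v, elem_step (u ++ rel1 ++ v) (u ++ v)
| es_rel2 : forall u v, elem_step (u ++ rel2 ++ v) (u ++ v).

Inductive weq : word -> word -> Prop :=
| weq_refl : forall u, weq u u
| weq_step : forall u v, elem_step u v -> weq u v
| weq_sym : forall u v, weq u v -> weq v u
| weq_trans : forall u v w, weq u v -> weq v w -> weq u w.

Inductive lhs : word -> Prop :=
| lhs_free : forall a, lhs [a; inv a]
| lhs_yrule : forall (e : bool) (i : nat), (1 <= i)%nat ->
    lhs ([ypow e] ++ xn i ++ [Y])
| lhs_yirule : forall (e : bool) (i : nat), (1 <= i)%nat ->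
    lhs ([ypow e] ++ xn (S i) ++ [Yi]).

Definition irreducible (w : word) : Prop :=
  ~ exists u l v, w = u ++ l ++ v /\ lhs l.

(* The directed edge of Gamma from g (represented by the word w) to g a,
   labelled a, lies on the tree T: it is traversed (in either direction)
   by the path from the identity labelled by some word of N. *)
Definition edge_on_T (w : word) (a : letter) : Prop :=
  exists u v,
    (irreducible (u ++ a :: v) /\ weq u w) \/
    (irreducible (u ++ inv a :: v) /\ weq u (w ++ [a])).

Fixpoint syl (n : nat) (is : nat -> Z) (eps : nat -> bool) : word :=
  match n with
  | O => xpow (is O)
  | S k => xpow (is (S k)) ++ [ypow (eps (S k))] ++ syl k is eps
  end.

Fixpoint psum (is : nat -> Z) (k : nat) : Z :=
  match k with
  | O => is O
  | S j => is (S j) + psum is j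
  end.

(* min { k | k <= n, s k <= c }, or n if there is no such k. *)
Fixpoint find_le_aux (s : nat -> Z) (c : Z) (k fuel : nat) : nat :=
  match fuel with
  | O => k
  | S f => if s k <=? c then k else find_le_aux s c (S k) f
  end.
Definition first_le (s : nat -> Z) (c : Z) (n : nat) : nat :=
  find_le_aux s c O n.

From Stdlib Require Import ZArith List Lia.
Import ListNotations.
Open Scope bool_scope.
Open Scope Z_scope.

(* Right multiplication by a generator can be computed directly on normal forms:
   appending y to x^{i_n} y ... y x^{i_0} triggers a y-rule of size s_0 = i_0 if
   s_0 >= 1, which moves x^{i_0} y to the left, where the next syllable now ends in
   x^{s_1} and the process repeats.  It stops at the first m with s_m <= 0, and the
   partial sums of the result are s_k + 1 for k < m.  To identify the
   result with nf(g y) one checks that this computation defines an action of the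
   free monoid on normal forms in which the defining relators of F act trivially
   (after cancelling a final y, each reduces to a y-rule read as an equation),
   and that it fixes irreducible words. *)

(** * Normal forms as syllable sequences *)

Inductive nform : Type := Pow (a : Z) | Syl (r : nform) (e : bool) (i : Z).

Fixpoint to_word (s : nform) : word :=
  match s with Pow a => xpow a | Syl r e i => to_word r ++ [ypow e] ++ xpow i end.

Definition xshift (d : Z) (s : nform) : nform :=
  match s with Pow a => Pow (a + d) | Syl r e i => Syl r e (i + d) end.

(* [r ++ [ypow e]] has no redex ending at the appended letter. *)
Definition junction_ok (r : nform) (e : bool) : Prop :=
  match r with
  | Pow _ => True
  | Syl _ e' k => if e then k <= 0 /\ (k = 0 -> e' = true)
                 else k <= 1 /\ (k = 0 -> e' = false)
  end.

Fixpoint reduced (s : nform) : Prop :=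
  match s with Pow _ => True | Syl r e _ => junction_ok r e /\ reduced r end.

(* [ymul s c] is the normal form of [to_word s ++ xpow c ++ [Y]]: the first branch
   is the y-rule of size [i + c], the second the cancellation of y^-1 y; [yimul]
   is the same for y^-1. *)
Fixpoint ymul (s : nform) (c : Z) : nform :=
  match s with
  | Pow a => Syl (Pow (a + c)) true 0
  | Syl r e i =>
      if 1 <=? i + c then Syl (xshift (- (i + c) - 1) (ymul r (i + c))) e (i + c + 1)
      else if (i + c =? 0) && negb e then r else Syl (Syl r e (i + c)) true 0
  end.

Fixpoint yimul (s : nform) (c : Z) : nform :=
  match s with
  | Pow a => Syl (Pow (a + c)) false 0
  | Syl r e i =>
      if 2 <=? i + c then Syl (xshift (- (i + c) + 1) (yimul r (i + c))) e (i + c - 1)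
      else if (i + c =? 0) && e then r else Syl (Syl r e (i + c)) false 0
  end.

Ltac split_ifs :=
  repeat (match goal with
          | |- context [?a <=? ?b] => destruct (Z.leb_spec a b)
          | |- context [?a =? ?b] => destruct (Z.eqb_spec a b)
          end; cbn [andb negb]; try lia).

Ltac f_equal_lia := first [reflexivity | lia | progress f_equal; f_equal_lia].

Lemma xshift_xshift d d' s : xshift d (xshift d' s) = xshift (d' + d) s.
Proof. destruct s; cbn; f_equal; lia. Qed.

Lemma xshift_0 s : xshift 0 s = s.
Proof. destruct s; cbn; f_equal; lia. Qed.

Lemma reduced_xshift d s : reduced (xshift d s) <-> reduced s.
Proof. destruct s; reflexivity. Qed.

Lemma ymul_xshift d s c : ymul (xshift d s) c = ymul s (d + c).
Proof. destruct s; cbn; [do 2 f_equal | rewrite <- Z.add_assoc]; lia || reflexivity. Qed.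

Lemma yimul_xshift d s c : yimul (xshift d s) c = yimul s (d + c).
Proof. destruct s; cbn; [do 2 f_equal | rewrite <- Z.add_assoc]; lia || reflexivity. Qed.

Lemma reduced_ymul s c : reduced s -> reduced (ymul s c).
Proof.
  revert c; induction s as [a|r IH e i]; intros c Hs; cbn; [tauto|].
  destruct Hs as [Hj Hr]. split_ifs.
  - split; [|apply reduced_xshift, IH, Hr].
    destruct r as [a|r' e' k]; cbn in Hj, Hr |- *; [destruct e; lia|].
    destruct Hr as [Hj' Hr']. split_ifs; destruct e'; cbn [xshift junction_ok negb].
    all: try (replace (k + (i + c) + 1 + (- (i + c) - 1)) with k by lia; exact Hj).
    all: try (destruct e; lia).
    destruct r' as [|r'' e'' k']; cbn in Hj' |- *; [exact I|].
    destruct e; lia.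
  - destruct e; cbn; [repeat split; auto; lia | exact Hr].
  - cbn. repeat split; auto; lia.
Qed.

Lemma reduced_yimul s c : reduced s -> reduced (yimul s c).
Proof.
  revert c; induction s as [a|r IH e i]; intros c Hs; cbn; [tauto|].
  destruct Hs as [Hj Hr]. split_ifs.
  - split; [|apply reduced_xshift, IH, Hr].
    destruct r as [a|r' e' k]; cbn in Hj, Hr |- *; [destruct e; lia|].
    destruct Hr as [Hj' Hr']. split_ifs; destruct e'; cbn [xshift junction_ok].
    all: try (replace (k + (i + c) - 1 + (- (i + c) + 1)) with k by lia; exact Hj).
    all: try (destruct e; lia).
    destruct r' as [|r'' e'' k']; cbn in Hj' |- *; [exact I|].
    destruct e; lia.
  - destruct e; cbn; [exact Hr | repeat split; auto; lia].
  - cbn. repeat split; auto; lia.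
Qed.

Lemma yimul_ymul s c : reduced s -> yimul (ymul s c) 0 = xshift c s.
Proof.
  revert c; induction s as [a|r IH e i]; intros c Hs; cbn; [reflexivity|].
  destruct Hs as [Hj Hr]. split_ifs; cbn; split_ifs.
  - rewrite yimul_xshift, Z.add_0_r.
    replace (- (i + c) - 1 + (i + c + 1)) with 0 by lia.
    rewrite IH, xshift_xshift by exact Hr.
    replace (i + c + (- (i + c + 1) + 1)) with 0 by lia.
    rewrite xshift_0. f_equal. lia.
  - destruct e; cbn; split_ifs; [reflexivity|].
    destruct r as [a|r' e' k]; cbn in Hj |- *; [f_equal_lia|].
    destruct Hj as [Hk1 Hk]. split_ifs; destruct e'; cbn;
      [discriminate (Hk ltac:(lia)) | f_equal_lia ..].
  - f_equal_lia.
Qed.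

Lemma ymul_yimul s c : reduced s -> ymul (yimul s c) 0 = xshift c s.
Proof.
  revert c; induction s as [a|r IH e i]; intros c Hs; cbn; [reflexivity|].
  destruct Hs as [Hj Hr]. split_ifs; cbn; split_ifs.
  - rewrite ymul_xshift, Z.add_0_r.
    replace (- (i + c) + 1 + (i + c - 1)) with 0 by lia.
    rewrite IH, xshift_xshift by exact Hr.
    replace (i + c + (- (i + c - 1) - 1)) with 0 by lia.
    rewrite xshift_0. f_equal_lia.
  - destruct e; cbn; split_ifs; [|reflexivity].
    destruct r as [a|r' e' k]; cbn in Hj |- *; [f_equal_lia|].
    destruct Hj as [Hk1 Hk]. split_ifs; destruct e'; cbn;
      [f_equal_lia | discriminate (Hk ltac:(lia)) | f_equal_lia ..].
  - f_equal_lia.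
Qed.

Lemma ymul_injective u v : reduced u -> reduced v -> ymul u 0 = ymul v 0 -> u = v.
Proof.
  intros Hu Hv E. rewrite <- (xshift_0 u), <- (xshift_0 v), <- !yimul_ymul by assumption.
  now rewrite E.
Qed.

(* s x^(c-t) y x^t y = s x^c y x^(-t-1) y x^(t+1): the y-rule of size t. *)
Lemma ymul_ymul_rule t s c : 1 <= t -> reduced s ->
  ymul (ymul s (c - t)) t = xshift (t + 1) (ymul (ymul s c) (- t - 1)).
Proof.
  intros Ht. revert c; induction s as [a|r IH e i]; intros c Hs.
  - cbn. split_ifs. cbn. f_equal_lia.
  - destruct Hs as [Hj Hr]. cbn. split_ifs; cbn; split_ifs; try f_equal_lia.
    + rewrite !ymul_xshift.
      replace (i + (c - t)) with (i + c - t) by lia.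
      replace (- (i + c - t) - 1 + (i + c - t + 1 + t)) with t by lia.
      replace (- (i + c) - 1 + (i + c + 1 + (- t - 1))) with (- t - 1) by lia.
      rewrite IH by exact Hr. cbn [xshift]. rewrite !xshift_xshift. f_equal_lia.
    + replace (i + c) with t by lia.
      destruct e; cbn; split_ifs; cbn.
      * f_equal_lia.
      * rewrite xshift_xshift. replace (- t - 1 + (t + 1)) with 0 by lia.
        now rewrite xshift_0.
    + cbn. f_equal_lia.
    + destruct e; cbn; split_ifs; cbn; [f_equal_lia|].
      destruct r as [a|r' e' k]; cbn in Hj |- *; split_ifs; cbn; f_equal_lia.
    + cbn. f_equal_lia.
Qed.

(* s y x^(-t-1) y^-1 x^(t+1) y^-1 x^(-t) y x^t = s *)
Lemma commutator_relator t s : 1 <= t -> reduced s ->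
  xshift t (ymul (yimul (yimul (ymul s 0) (- t - 1)) (t + 1)) (- t)) = s.
Proof.
  intros Ht Hs.
  set (s1 := ymul s 0). set (s3 := yimul s1 (- t - 1)). set (s5 := yimul s3 (t + 1)).
  assert (Hs1 : reduced s1) by now apply reduced_ymul.
  assert (Hs3 : reduced s3) by now apply reduced_yimul.
  assert (Hs5 : reduced s5) by now apply reduced_yimul.
  apply ymul_injective; [now apply reduced_xshift, reduced_ymul | exact Hs |].
  rewrite ymul_xshift, Z.add_0_r, <- (Z.sub_0_l t), ymul_ymul_rule by assumption.
  unfold s5. rewrite ymul_yimul, ymul_xshift by exact Hs3.
  replace (t + 1 + (- t - 1)) with 0 by lia.
  unfold s3. rewrite ymul_yimul, xshift_xshift by exact Hs1.
  replace (- t - 1 + (t + 1)) with 0 by lia.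
  apply xshift_0.
Qed.

(** * The action of F on normal forms *)

Definition act (a : letter) (s : nform) : nform :=
  match a with X => xshift 1 s | Xi => xshift (-1) s | Y => ymul s 0 | Yi => yimul s 0 end.

Definition act_word (w : word) (s : nform) : nform := fold_left (fun s a => act a s) w s.

Definition nf (w : word) : nform := act_word w (Pow 0).

Lemma act_word_app u v s : act_word (u ++ v) s = act_word v (act_word u s).
Proof. apply fold_left_app. Qed.

Lemma reduced_act_word w s : reduced s -> reduced (act_word w s).
Proof.
  revert s; induction w as [|a w IH]; intros s Hs; [exact Hs|].
  apply IH. destruct a; cbn.
  1,2: now apply reduced_xshift.
  - now apply reduced_ymul.
  - now apply reduced_yimul.
Qed.

Lemma act_inv a s : reduced s -> act (inv a) (act a s) = s.
Proof.
  intros Hs. destruct a; cbn.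
  1,2: rewrite xshift_xshift; apply xshift_0.
  - rewrite yimul_ymul by exact Hs. apply xshift_0.
  - rewrite ymul_yimul by exact Hs. apply xshift_0.
Qed.

Lemma act_word_xn n s : act_word (xn n) s = xshift (Z.of_nat n) s.
Proof.
  revert s; induction n as [|n IH]; intros s; cbn - [Z.of_nat].
  - symmetry. apply xshift_0.
  - rewrite IH, xshift_xshift. f_equal. lia.
Qed.

Lemma act_word_xin n s : act_word (xin n) s = xshift (- Z.of_nat n) s.
Proof.
  revert s; induction n as [|n IH]; intros s; cbn - [Z.of_nat].
  - symmetry. apply xshift_0.
  - rewrite IH, xshift_xshift. f_equal. lia.
Qed.

Definition relator (t : nat) : word := comm [X; Yi] (xin t ++ [Y] ++ xn t).

Lemma winv_conj_y t : winv (xin t ++ [Y] ++ xn t) = xin t ++ [Yi] ++ xn t.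
Proof.
  unfold winv, xin, xn. rewrite !map_app, !rev_app_distr, !map_repeat, !rev_repeat.
  now rewrite <- app_assoc.
Qed.

Lemma act_word_relator t s : (1 <= t)%nat -> reduced s -> act_word (relator t) s = s.
Proof.
  intros Ht Hs. unfold relator, comm. rewrite winv_conj_y. change (winv [X; Yi]) with [Y; Xi].
  rewrite !act_word_app, !act_word_xn, !act_word_xin. cbn [act_word fold_left act].
  repeat rewrite ?ymul_xshift, ?yimul_xshift, ?xshift_xshift.
  rewrite <- (commutator_relator (Z.of_nat t) s) at 2 by (lia || exact Hs).
  f_equal_lia.
Qed.

Lemma reduced_nf w : reduced (nf w).
Proof. apply reduced_act_word. exact I. Qed.

Lemma nf_elem_step u v : elem_step u v -> nf u = nf v.
Proof.
  intros Hst. unfold nf.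
  destruct Hst as [u v a|u v|u v]; rewrite !act_word_app; f_equal.
  - apply act_inv, reduced_nf.
  - apply (act_word_relator 1), reduced_nf; lia.
  - apply (act_word_relator 2), reduced_nf; lia.
Qed.

Lemma nf_weq u v : weq u v -> nf u = nf v.
Proof.
  induction 1 as [u|u v Hst|u v _ IH|u v w _ IH1 _ IH2]; try congruence.
  now apply nf_elem_step.
Qed.

(** * Irreducible words are normal forms *)

Lemma xpow_succ i : 0 <= i -> xpow (i + 1) = xpow i ++ [X].
Proof.
  intros Hi. unfold xpow. split_ifs.
  replace (Z.to_nat (i + 1)) with (S (Z.to_nat i)) by lia.
  apply repeat_cons.
Qed.

Lemma xpow_pred i : i <= 0 -> xpow (i - 1) = xpow i ++ [Xi].
Proof.
  intros Hi. unfold xpow. split_ifs.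
  - replace i with 0 by lia. reflexivity.
  - replace (Z.to_nat (- (i - 1))) with (S (Z.to_nat (- i))) by lia.
    apply repeat_cons.
Qed.

Lemma xpow_nonneg i : 0 <= i -> xpow i = xn (Z.to_nat i).
Proof. intros Hi. unfold xpow. now split_ifs. Qed.

Lemma reducible u l v : lhs l -> ~ irreducible (u ++ l ++ v).
Proof. intros Hl Hirr. apply Hirr. now exists u, l, v. Qed.

Lemma irreducible_app_l u v : irreducible (u ++ v) -> irreducible u.
Proof.
  intros Hirr (p & l & q & -> & Hl). apply (reducible p l (q ++ v) Hl).
  now rewrite <- !app_assoc in *.
Qed.

Definition xprefix (s : nform) : word :=
  match s with Pow _ => [] | Syl r e _ => to_word r ++ [ypow e] end.

Definition xlast (s : nform) : Z := match s with Pow a => a | Syl _ _ i => i end.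

Lemma to_word_xshift d s : to_word (xshift d s) = xprefix s ++ xpow (xlast s + d).
Proof. destruct s; cbn; [|rewrite <- app_assoc]; reflexivity. Qed.

Lemma to_word_xprefix s : to_word s = xprefix s ++ xpow (xlast s).
Proof. rewrite <- (xshift_0 s) at 1. now rewrite to_word_xshift, Z.add_0_r. Qed.

Lemma to_word_act_x s : irreducible (to_word s ++ [X]) -> to_word (act X s) = to_word s ++ [X].
Proof.
  cbn. rewrite to_word_xshift, to_word_xprefix, <- app_assoc. intros Hirr.
  destruct (Z_lt_le_dec (xlast s) 0) as [Hneg|Hnn].
  - exfalso. rewrite <- (Z.add_simpl_r (xlast s) 1), xpow_pred in Hirr by lia.
    apply (reducible (xprefix s ++ xpow (xlast s + 1)) _ [] (lhs_free Xi)).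
    now rewrite app_nil_r, <- !app_assoc in *.
  - now rewrite xpow_succ.
Qed.

Lemma to_word_act_xi s : irreducible (to_word s ++ [Xi]) -> to_word (act Xi s) = to_word s ++ [Xi].
Proof.
  cbn. rewrite to_word_xshift, to_word_xprefix, <- app_assoc. intros Hirr.
  destruct (Z_lt_le_dec 0 (xlast s)) as [Hpos|Hnp].
  - exfalso. rewrite <- (Z.sub_add 1 (xlast s)), xpow_succ in Hirr by lia.
    apply (reducible (xprefix s ++ xpow (xlast s - 1)) _ [] (lhs_free X)).
    now rewrite app_nil_r, <- !app_assoc in *.
  - replace (xlast s + -1) with (xlast s - 1) by lia. now rewrite xpow_pred.
Qed.

Lemma to_word_act_y s : irreducible (to_word s ++ [Y]) -> to_word (act Y s) = to_word s ++ [Y].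
Proof.
  destruct s as [a|r e i]; cbn; intros Hirr; rewrite ?Z.add_0_r; [reflexivity|].
  rewrite <- !app_assoc in *. cbn [app] in *. split_ifs.
  - exfalso. rewrite xpow_nonneg in Hirr by lia.
    apply (reducible (to_word r) _ [] (lhs_yrule e (Z.to_nat i) ltac:(lia))).
    now rewrite app_nil_r.
  - destruct e; cbn; subst i; [now rewrite <- app_assoc|].
    exfalso. exact (reducible (to_word r) _ [] (lhs_free Yi) Hirr).
  - cbn. now rewrite <- app_assoc.
Qed.

Lemma to_word_act_yi s : irreducible (to_word s ++ [Yi]) -> to_word (act Yi s) = to_word s ++ [Yi].
Proof.
  destruct s as [a|r e i]; cbn; intros Hirr; rewrite ?Z.add_0_r; [reflexivity|].
  rewrite <- !app_assoc in *. cbn [app] in *. split_ifs.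
  - exfalso. rewrite xpow_nonneg, <- (Nat.succ_pred_pos (Z.to_nat i)) in Hirr by lia.
    apply (reducible (to_word r) _ [] (lhs_yirule e (Nat.pred (Z.to_nat i)) ltac:(lia))).
    now rewrite app_nil_r.
  - destruct e; cbn; subst i; [|now rewrite <- app_assoc].
    exfalso. exact (reducible (to_word r) _ [] (lhs_free Y) Hirr).
  - cbn. now rewrite <- app_assoc.
Qed.

Lemma to_word_act a s : irreducible (to_word s ++ [a]) -> to_word (act a s) = to_word s ++ [a].
Proof.
  destruct a.
  - apply to_word_act_x.
  - apply to_word_act_xi.
  - apply to_word_act_y.
  - apply to_word_act_yi.
Qed.

Lemma to_word_nf w : irreducible w -> to_word (nf w) = w.
Proof.
  induction w as [|a w IH] using rev_ind; intros Hirr; [reflexivity|].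
  unfold nf. rewrite act_word_app. cbn.
  pose proof (IH (irreducible_app_l _ _ Hirr)) as Hw. unfold nf in Hw.
  rewrite to_word_act; rewrite Hw; [reflexivity|exact Hirr].
Qed.

(** * Exponents and partial sums *)

(* [ylen s] and [xexp s k] are the n and i_k of the syllable form of [to_word s]. *)
Fixpoint ylen (s : nform) : nat := match s with Pow _ => O | Syl r _ _ => S (ylen r) end.

Fixpoint xexp (s : nform) (k : nat) : Z :=
  match s, k with
  | Pow a, O => a
  | Pow _, S _ => 0
  | Syl _ _ i, O => i
  | Syl r _ _, S k => xexp r k
  end.

Lemma syl_S n is eps : syl (S n) is eps =
  syl n (fun j => is (S j)) (fun j => eps (S j)) ++ [ypow (eps 1%nat)] ++ xpow (is O).
Proof.
  revert is eps; induction n as [|n IH]; intros is eps; [reflexivity|].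
  change (syl (S (S n)) is eps)
    with (xpow (is (S (S n))) ++ [ypow (eps (S (S n)))] ++ syl (S n) is eps).
  rewrite IH. cbn. now rewrite <- !app_assoc.
Qed.

Definition yfree (w : word) : Prop := forall e, ~ In (ypow e) w.

Lemma yfree_xpow i : yfree (xpow i).
Proof.
  intros e Hin. unfold xpow in Hin.
  destruct (0 <=? i); apply repeat_spec in Hin; now destruct e.
Qed.

Lemma ypow_inj e e' : ypow e = ypow e' -> e = e'.
Proof. now destruct e, e'. Qed.

Lemma app_ypow_inj u v e e' p q : yfree p -> yfree q ->
  u ++ ypow e :: p = v ++ ypow e' :: q -> u = v /\ e = e' /\ p = q.
Proof.
  intros Hp Hq. revert v; induction u as [|a u IH]; intros [|b v] E; cbn in E; injection E.
  - intros <- <-%ypow_inj. auto.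
  - intros Ep _. destruct (Hp e'). rewrite Ep. apply in_elt.
  - intros Eq _. destruct (Hq e). rewrite <- Eq. apply in_elt.
  - intros Eu <-. destruct (IH v Eu) as (-> & -> & ->). auto.
Qed.

Lemma xpow_inj i j : xpow i = xpow j -> i = j.
Proof.
  unfold xpow. intros E. destruct (Z.leb_spec 0 i), (Z.leb_spec 0 j).
  2: destruct (Z.to_nat (- j)) eqn:?; [lia|]; destruct (Z.to_nat i); discriminate.
  2: destruct (Z.to_nat (- i)) eqn:?; [lia|]; destruct (Z.to_nat j); discriminate.
  all: apply (f_equal (@length letter)) in E; rewrite !repeat_length in E; lia.
Qed.

Lemma to_word_syl s n is eps : to_word s = syl n is eps ->
  ylen s = n /\ forall k, (k <= n)%nat -> xexp s k = is k.
Proof.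
  revert n is eps; induction s as [a|r IH e i]; intros [|n] is eps E; cbn [to_word] in E.
  - apply xpow_inj in E as ->. split; [reflexivity|]. intros [|k] Hk; [reflexivity|lia].
  - rewrite syl_S in E. destruct (yfree_xpow a (eps 1%nat)). rewrite E. apply in_elt.
  - destruct (yfree_xpow (is O) e). cbn in E. rewrite <- E. apply in_elt.
  - rewrite syl_S in E. apply app_ypow_inj in E as (Er & _ & Ei%xpow_inj); try apply yfree_xpow.
    destruct (IH _ _ _ Er) as [Hn Hk]. split; [cbn; congruence|].
    intros [|k] Hkn; [exact Ei|]. apply Hk. lia.
Qed.

Lemma find_le_aux_S f c k fuel :
  find_le_aux f c (S k) fuel = S (find_le_aux (fun j => f (S j)) c k fuel).
Proof.
  revert k; induction fuel as [|fuel IH]; intros k; cbn; [reflexivity|].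
  destruct (f (S k) <=? c); [reflexivity|apply IH].
Qed.

Lemma first_le_S f c n :
  first_le f c (S n) = if f O <=? c then O else S (first_le (fun k => f (S k)) c n).
Proof. unfold first_le. cbn. destruct (f O <=? c); [reflexivity|apply find_le_aux_S]. Qed.

Lemma first_le_ext f g c n : (forall k, (k < n)%nat -> f k = g k) ->
  first_le f c n = first_le g c n.
Proof.
  revert f g; induction n as [|n IH]; intros f g Hfg; [reflexivity|].
  rewrite !first_le_S, Hfg by lia. destruct (g O <=? c); [reflexivity|].
  f_equal. apply IH. intros k Hk. apply Hfg. lia.
Qed.

Lemma first_le_le f c n : (first_le f c n <= n)%nat.
Proof.
  revert f; induction n as [|n IH]; intros f; [reflexivity|].
  rewrite first_le_S. destruct (f O <=? c); [lia|]. specialize (IH (fun k => f (S k))). lia.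
Qed.

Lemma psum_ext f g k : (forall j, (j <= k)%nat -> f j = g j) -> psum f k = psum g k.
Proof.
  induction k as [|k IH]; intros Hfg; cbn; rewrite Hfg by lia; [reflexivity|].
  rewrite IH; [reflexivity|]. intros j Hj. apply Hfg. lia.
Qed.

Lemma psum_xexp_xshift d s k : psum (xexp (xshift d s)) k = psum (xexp s) k + d.
Proof.
  induction k as [|k IH]; cbn; [destruct s; reflexivity|].
  rewrite IH. destruct s; cbn; lia.
Qed.

Lemma psum_xexp_Syl r e i k : psum (xexp (Syl r e i)) (S k) = psum (xexp (xshift i r)) k.
Proof.
  rewrite psum_xexp_xshift. induction k as [|k IH]; cbn in *; [lia|].
  rewrite IH. lia.
Qed.

Definition first_psum_le (s : nform) (c : Z) : nat := first_le (psum (xexp s)) c (ylen s).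

Lemma ylen_xshift d s : ylen (xshift d s) = ylen s.
Proof. now destruct s. Qed.


Lemma first_psum_le_Syl r e i c :
  first_psum_le (Syl r e i) c = if i <=? c then O else S (first_psum_le (xshift i r) c).
Proof.
  unfold first_psum_le. cbn [ylen]. rewrite first_le_S, ylen_xshift. cbn [psum xexp].
  destruct (i <=? c); [reflexivity|].
  f_equal. apply first_le_ext. intros k _. apply (psum_xexp_Syl r e).
Qed.

Lemma ymul_first_psum_le s c : reduced s ->
  first_psum_le (ymul s c) 1 = first_psum_le (xshift c s) 0 /\
  forall k, (k < first_psum_le (xshift c s) 0)%nat ->
    psum (xexp (ymul s c)) k - 1 = psum (xexp (xshift c s)) k.
Proof.
  revert c; induction s as [a|r IH e i]; intros c Hs.
  { split; [reflexivity|]. intros k Hk. cbn in Hk. lia. }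
  destruct Hs as [Hj Hr]. cbn [ymul xshift]. rewrite first_psum_le_Syl. split_ifs.
  - rewrite first_psum_le_Syl. split_ifs. rewrite xshift_xshift.
    replace (- (i + c) - 1 + (i + c + 1)) with 0 by lia. rewrite xshift_0.
    destruct (IH (i + c) Hr) as [IH1 IH2]. split; [now rewrite IH1|].
    intros [|k] Hk; [cbn; lia|].
    rewrite !psum_xexp_Syl, xshift_xshift.
    replace (- (i + c) - 1 + (i + c + 1)) with 0 by lia. rewrite xshift_0.
    apply IH2. lia.
  - split; [|intros k Hk; lia].
    destruct e; cbn [negb]; [now rewrite first_psum_le_Syl|].
    destruct r as [a|r' e' k]; [reflexivity|].
    rewrite first_psum_le_Syl. cbn in Hj. now split_ifs.
  - split; [|intros k Hk; lia]. now rewrite first_psum_le_Syl.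
Qed.

Lemma first_psum_le_le s c : (first_psum_le s c <= ylen s)%nat.
Proof. apply first_le_le. Qed.

Lemma psum_syl s n is eps : to_word s = syl n is eps ->
  forall k, (k <= n)%nat -> psum (xexp s) k = psum is k.
Proof.
  intros E k Hk. apply psum_ext. intros j Hj. apply (to_word_syl s n is eps E). lia.
Qed.

Lemma first_le_syl s n is eps c : to_word s = syl n is eps ->
  first_le (psum is) c n = first_psum_le s c.
Proof.
  intros E. unfold first_psum_le. rewrite (proj1 (to_word_syl s n is eps E)).
  apply first_le_ext. intros k Hk. symmetry. apply (psum_syl s n is eps E). lia.
Qed.

Theorem lemma4p1 (gamma gamma' : word)
  (n n' : nat) (is js : nat -> Z) (eps eps' : nat -> bool) :
  irreducible gamma -> irreducible gamma' ->
  weq gamma' (gamma ++ [Y]) ->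
  ~ edge_on_T gamma Y ->
  gamma = syl n is eps -> gamma' = syl n' js eps' ->
  first_le (psum is) 0 n = first_le (psum js) 1 n' /\
  (forall k : nat, (k < first_le (psum is) 0 n)%nat ->
     psum js k - 1 = psum is k).
Proof.
  (* The conclusion holds for every y-edge: on T, m = m' = 0. *)
  intros Hirr Hirr' Hweq _ Egamma Egamma'.
  set (s := nf gamma).
  assert (Hs : reduced s) by apply reduced_nf.
  assert (E : to_word s = syl n is eps) by (rewrite <- Egamma; now apply to_word_nf).
  assert (E' : to_word (ymul s 0) = syl n' js eps').
  { rewrite <- Egamma', <- (to_word_nf _ Hirr'), (nf_weq _ _ Hweq).
    unfold nf. now rewrite act_word_app. }
  destruct (ymul_first_psum_le s 0 Hs) as [Hm Hsizes]. rewrite xshift_0 in Hm, Hsizes.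
  rewrite (first_le_syl _ _ _ _ _ E), (first_le_syl _ _ _ _ _ E'), Hm.
  split; [reflexivity|]. intros k Hk.
  assert (Hkn := first_psum_le_le s 0). assert (Hkn' := first_psum_le_le (ymul s 0) 1).
  rewrite (proj1 (to_word_syl _ _ _ _ E)) in Hkn. rewrite (proj1 (to_word_syl _ _ _ _ E')) in Hkn'.
  rewrite <- (psum_syl _ _ _ _ E), <- (psum_syl _ _ _ _ E') by lia.
  now apply Hsizes.
Qed.
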